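(* Let $\mathcal{D}$ be a distribution over $\mathcal{X}\times\mathcal{Y}$ where $\mathcal{Y}\subseteq\mathbb{R}^d$ and $\|y\|_\infty\le M$ for all $y\in\mathcal{Y}$, let $\alpha>0$, and let $\mathcal{T}$ be a bucketing with width $w=\sqrt{\alpha/M}$. If a model $h:\mathcal{X}\to\mathcal{Y}$ is $\alpha$-self-consistent, then \[\left|\mathbb{E}_{\mathcal{D}}[\pi_h(x)\cdot h(x)]-\mathbb{E}_{\mathcal{D}}[\pi_h(x)\cdot y]\right|\le 2d\sqrt{\alpha M}.\]
   Context: $\Omega\subseteq[0,1]^d$ is an arbitrary feasible set of actions; a policy is a map $\pi:\mathcal{X}\to\Omega$. For a model $h:\mathcal{X}\to\mathcal{Y}$, its induced policy is $\pi_h(x)=\arg\max_{a\in\Omega}a\cdot h(x)$. A bucketing $\mathcal{T}$ of width $w$ is a partition of $[0,1]$ into $1/w$ consecutive intervals $\tau$ of width $w$. A model $h$ is $\alpha$-consistent with respect to a collection $\mathcal{C}\subseteq 2^{\mathcal{X}}$ if for every $C\in\mathcal{C}$, $\|\mathbb{E}_{\mathcal{D}}[y-h(x)\mid x\in C]\|_\infty\le \alpha/\Pr[x\in C]$. The level sets of a policy $\pi$ are $\mathcal{C}^{\mathcal{T}}_\pi=\{\{x:\pi(x)_i\in\tau\}:i\in[d],\tau\in\mathcal{T}\}$. The model $h$ is $\alpha$-self-consistent if it is $\alpha$-consistent with respect to $\mathcal{C}^{\mathcal{T}}_{\pi_h}$. *)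

From HB Require Import structures.
From mathcomp Require Import all_boot all_order all_algebra.
From mathcomp Require Import all_classical all_reals all_analysis.

Set Implicit Arguments.
Unset Strict Implicit.
Unset Printing Implicit Defensive.

Import Order.TTheory GRing.Theory Num.Theory.
Local Open Scope classical_set_scope.
Local Open Scope ring_scope.

Definition vec (R : realType) (d : nat) := 'I_d -> R.

Definition dotv (R : realType) (d : nat) (a b : vec R d) : R :=
  \sum_(i < d) a i * b i.

Definition Ex (dsp : measure_display) (T : measurableType dsp) (R : realType)
  (P : probability T R) (f : T -> R) : R :=
  fine (\int[P]_t (f t)%:E).

(* Probability of the event "x in C" where xs : T -> X is the feature part. *)
Definition PrX (dsp : measure_display) (T : measurableType dsp) (R : realType)
  (P : probability T R) (X : Type) (xs : T -> X) (C : set X) : R :=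
  fine (P (xs @^-1` C)).

Definition condEx (dsp : measure_display) (T : measurableType dsp) (R : realType)
  (P : probability T R) (X : Type) (xs : T -> X) (C : set X) (f : T -> R) : R :=
  Ex P (fun t => f t * (\1_(xs @^-1` C) t)) / PrX P xs C.

Definition bucketing (R : realType) (w : R) (n : nat) (tau : 'I_n -> set R) : Prop :=
  [/\ n%:R * w = 1,
      (forall k : 'I_n, exists b1 b2 : bool,
          tau k = [set x | (if b1 then k%:R * w <= x else k%:R * w < x) /\
                           (if b2 then x <= k.+1%:R * w else x < k.+1%:R * w)]),
      (forall k l : 'I_n, k != l -> tau k `&` tau l = set0) &
      \bigcup_(k in [set: 'I_n]) tau k = [set x : R | 0 <= x <= 1]].

Definition level_sets (R : realType) (X : Type) (d n : nat)
  (tau : 'I_n -> set R) (pi : X -> vec R d) : set (set X) :=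
  [set C | exists (i : 'I_d) (k : 'I_n), C = [set x | tau k (pi x i)]].

Definition consistent (dsp : measure_display) (T : measurableType dsp)
  (R : realType) (P : probability T R) (X : Type) (d : nat)
  (xs : T -> X) (ys : T -> vec R d) (h : X -> vec R d) (alpha : R)
  (CC : set (set X)) : Prop :=
  forall C, CC C -> 0 < PrX P xs C ->
    forall i : 'I_d,
      `| condEx P xs C (fun t => ys t i - h (xs t) i) | <= alpha / PrX P xs C.

Definition induced_policy (R : realType) (X : Type) (d : nat)
  (Omega : set (vec R d)) (h : X -> vec R d) (pi : X -> vec R d) : Prop :=
  forall x, Omega (pi x) /\ forall a, Omega a -> dotv a (h x) <= dotv (pi x) (h x).

From HB Require Import structures.
From mathcomp Require Import all_boot all_order all_algebra.
From mathcomp Require Import all_classical all_reals all_analysis.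
From mathcomp Require Import ring lra.
Import Order.TTheory GRing.Theory Num.Theory.
Local Open Scope classical_set_scope.
Local Open Scope ring_scope.

(* Fix a coordinate i, write p = pi(x)_i and g = y_i - h(x)_i, and round p to
   the midpoint c of its bucket, so that |p - c| <= w/2.  Then E[c g] is a
   combination, with weights in [0,1], of the n = 1/w bucket terms
   E[g 1{p in tau_k}], each at most alpha in absolute value by
   self-consistency, so |E[c g]| <= n alpha = sqrt(alpha M).  The rounding
   error E[(p - c) g] is at most (w/2) 2M = sqrt(alpha M).  Summing over the d
   coordinates gives 2 d sqrt(alpha M). *)

Section bounded_expectation.
Context {R : realType} {dsp : measure_display} {T : measurableType dsp}.
Implicit Types (f g : T -> R) (A : set T).

Definition bounded_measurable f :=
  measurable_fun setT f /\ exists B : R, forall t, `|f t| <= B.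

Lemma bounded_measurable_cst c : bounded_measurable (fun=> c).
Proof. by split; [exact: measurable_cst | exists `|c|]. Qed.

Lemma bounded_measurableD {f g} :
  bounded_measurable f -> bounded_measurable g ->
  bounded_measurable (fun t => f t + g t).
Proof.
move=> [mf [B1 fB1]] [mg [B2 gB2]].
split; first exact: measurable_realfun.measurable_funD.
by exists (B1 + B2) => t; apply: le_trans (ler_normD _ _) (lerD _ _).
Qed.

Lemma bounded_measurableB {f g} :
  bounded_measurable f -> bounded_measurable g ->
  bounded_measurable (fun t => f t - g t).
Proof.
move=> [mf [B1 fB1]] [mg [B2 gB2]].
split; first exact: measurable_realfun.measurable_funB.
by exists (B1 + B2) => t; apply: le_trans (ler_normB _ _) (lerD _ _).
Qed.

Lemma bounded_measurableM {f g} :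
  bounded_measurable f -> bounded_measurable g ->
  bounded_measurable (fun t => f t * g t).
Proof.
move=> [mf [B1 fB1]] [mg [B2 gB2]].
split; first exact: measurable_realfun.measurable_funM.
by exists (B1 * B2) => t; rewrite normrM ler_pM.
Qed.

Lemma bounded_measurable_indic {A} : measurable A -> bounded_measurable (\1_A).
Proof.
move=> mA; split; first exact: measurable_realfun.measurable_indic.
by exists 1 => t; rewrite indicE normr_nat lern1 leq_b1.
Qed.

Lemma bounded_measurable_sum {I : Type} (s : seq I) (F : I -> T -> R) :
  (forall i, bounded_measurable (F i)) ->
  bounded_measurable (fun t => \sum_(i <- s) F i t).
Proof.
move=> bF; elim: s => [|a s IH].
  by under eq_fun do rewrite big_nil; exact: bounded_measurable_cst.
by under eq_fun do rewrite big_cons; exact: bounded_measurableD.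
Qed.

Variable P : probability T R.

Lemma bounded_measurable_integrable {f} :
  bounded_measurable f -> P.-integrable setT (EFin \o f).
Proof.
move=> [mf [B fB]].
apply: (@le_integrable _ _ _ _ _ measurableT _ (EFin \o cst B)) => //.
- exact/measurable_realfun.measurable_EFinP.
- by move=> t _ /=; rewrite !lee_fin (le_trans (fB t) (ler_norm _)).
- exact: finite_measure_integrable_cst.
Qed.

Lemma ExD f g : bounded_measurable f -> bounded_measurable g ->
  Ex P (fun t => f t + g t) = Ex P f + Ex P g.
Proof.
move=> bf bg.
exact: (RintegralD measurableT
  (bounded_measurable_integrable bf) (bounded_measurable_integrable bg)).
Qed.

Lemma ExB f g : bounded_measurable f -> bounded_measurable g ->
  Ex P (fun t => f t - g t) = Ex P f - Ex P g.
Proof.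
move=> bf bg.
exact: (RintegralB measurableT
  (bounded_measurable_integrable bf) (bounded_measurable_integrable bg)).
Qed.

Lemma ExZ c f : bounded_measurable f -> Ex P (fun t => c * f t) = c * Ex P f.
Proof.
move=> bf.
exact: (RintegralZl c measurableT (bounded_measurable_integrable bf)).
Qed.

Lemma Ex_cst c : Ex P (fun=> c) = c.
Proof.
rewrite -[Ex _ _]/(Rintegral P setT _) Rintegral_cst //.
by rewrite (congr1 fine (probability_setT P)) mulr1.
Qed.

Lemma Ex_indic A : measurable A -> Ex P (\1_A) = fine (P A).
Proof. by move=> mA; rewrite /Ex integral_indic // setIT. Qed.

Lemma Ex_sum {I : Type} (s : seq I) (F : I -> T -> R) :
  (forall i, bounded_measurable (F i)) ->
  Ex P (fun t => \sum_(i <- s) F i t) = \sum_(i <- s) Ex P (F i).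
Proof.
move=> bF; elim: s => [|a s IH].
  by under eq_fun do rewrite big_nil; rewrite big_nil Ex_cst.
under eq_fun do rewrite big_cons.
by rewrite big_cons ExD ?IH //; exact: bounded_measurable_sum.
Qed.

Lemma le_norm_Ex {f g} : bounded_measurable f -> bounded_measurable g ->
  (forall t, `|f t| <= g t) -> `|Ex P f| <= Ex P g.
Proof.
move=> bf bg fg.
have If := bounded_measurable_integrable bf.
apply: le_trans (le_normr_Rintegral measurableT If) _.
apply: (le_Rintegral measurableT _ (bounded_measurable_integrable bg)).
  apply: bounded_measurable_integrable; case: bf => mf [B fB].
  by split; [exact: measurableT_comp | exists B => t; rewrite normr_id].
by move=> t _; exact: fg.
Qed.

End bounded_expectation.

Definition bucket_mid {R : realType} (w : R) {n : nat} (k : 'I_n) : R :=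
  (k%:R + 2^-1) * w.

Definition bucket_round {R : realType} (w : R) {n : nat} (tau : 'I_n -> set R)
    (x : R) : R :=
  \sum_(k < n) bucket_mid w k * \1_(tau k) x.

Section bucketing.
Context {R : realType} {w : R} {n : nat} {tau : 'I_n -> set R}.
Hypothesis tau_bucketing : bucketing w tau.

Lemma bucketing_width_gt0 : 0 < w.
Proof.
case: tau_bucketing => nw1 _ _ _.
have n_gt0 : 0 < n%:R :> R.
  rewrite ltr0n lt0n; apply: contraPneq nw1 => ->.
  by rewrite mul0r => /eqP; rewrite eq_sym oner_eq0.
by rewrite -(pmulr_rgt0 _ n_gt0) nw1 ltr01.
Qed.

Lemma measurable_bucket k : measurable (tau k).
Proof.
case: tau_bucketing => _ tau_itv _ _; have [b1 [b2 ->]] := tau_itv k.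
suff -> : [set x | (if b1 then k%:R * w <= x else k%:R * w < x) /\
                   (if b2 then x <= k.+1%:R * w else x < k.+1%:R * w)] =
          [set` Interval (BSide b1 (k%:R * w)) (BSide (~~ b2) (k.+1%:R * w))].
  exact: measurable_itv.
by apply/seteqP; split => x; rewrite /= in_itv /=; case: b1; case: b2 => /=;
  move/andP.
Qed.

Lemma exists_bucket x : 0 <= x <= 1 ->
  exists k0 : 'I_n, [/\ tau k0 x, forall k, k != k0 -> ~ tau k x &
                       k0%:R * w <= x <= k0.+1%:R * w].
Proof.
case: tau_bucketing => _ tau_itv tau_disj tau_cover x01.
have : [set x : R | 0 <= x <= 1] x by [].
rewrite -tau_cover => -[k0 _ tau_k0x]; exists k0; split => //.
  by move=> k /tau_disj tau_kk0 tau_kx; have : (tau k `&` tau k0) x by [];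
     rewrite tau_kk0.
have [b1 [b2 tau_k0E]] := tau_itv k0.
move: tau_k0x; rewrite {}tau_k0E => -[lb ub]; apply/andP; split.
  by case: b1 lb => // /ltW.
by case: b2 ub => // /ltW.
Qed.

Lemma bucket_mid_ge0_le1 (k : 'I_n) : 0 <= bucket_mid w k <= 1.
Proof.
have w_gt0 := bucketing_width_gt0.
case: tau_bucketing => nw1 _ _ _.
have k1_le_n : k.+1%:R <= n%:R :> R by rewrite ler_nat ltn_ord.
rewrite /bucket_mid; apply/andP; split.
  by rewrite mulr_ge0 ?addr_ge0 ?invr_ge0 // ltW.
by rewrite -[X in _ <= X]nw1 ler_pM2r //; move: k1_le_n; rewrite -natr1; lra.
Qed.

Lemma bucket_round_err x :
  0 <= x <= 1 -> `|x - bucket_round w tau x| <= w / 2.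
Proof.
move=> /exists_bucket[k0 [tau_k0x not_tau_kx]].
rewrite /bucket_round (bigD1 k0) //= big1 ?addr0; last first.
  by move=> k /not_tau_kx ?; rewrite indicE memNset ?mulr0.
rewrite indicE mem_set // mulr1 /bucket_mid ler_norml -natr1.
by move=> /andP[lb ub]; apply/andP; split; lra.
Qed.

End bucketing.

Section bucket_consistency.
Context {R : realType} {dsp : measure_display} {T : measurableType dsp}.
Variable P : probability T R.

Lemma norm_Ex_mul_indic_le {g : T -> R} {A : set T} {alpha : R} :
  bounded_measurable g -> measurable A -> 0 <= alpha ->
  (0 < fine (P A) ->
     `|Ex P (fun t => g t * \1_A t) / fine (P A)| <= alpha / fine (P A)) ->
  `|Ex P (fun t => g t * \1_A t)| <= alpha.
Proof.
move=> bg mA alpha_ge0 condA; have [PA_gt0|PA_le0] := ltP 0 (fine (P A)).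
  have PAV_gt0 : 0 < (fine (P A))^-1 by rewrite invr_gt0.
  by move: (condA PA_gt0); rewrite normrM (gtr0_norm PAV_gt0) ler_pM2r.
(* A null event carries no consistency constraint, but there the term is at
   most |B| P(A) <= 0. *)
have [_ [B gB]] := bg.
have bA : bounded_measurable (\1_A : T -> R) := bounded_measurable_indic mA.
apply: le_trans (le_norm_Ex P (g := fun t => `|B| * \1_A t) _ _ _) _.
- exact: bounded_measurableM.
- exact: bounded_measurableM (bounded_measurable_cst _) bA.
- move=> t; rewrite normrM indicE normr_nat ler_wpM2r //.
  exact: le_trans (gB t) (ler_norm B).
rewrite ExZ // Ex_indic //.
by apply: le_trans alpha_ge0; rewrite mulr_ge0_le0.
Qed.

Lemma norm_Ex_mul_le_bucketing {w : R} {n : nat} {tau : 'I_n -> set R}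
    {p g : T -> R} {B alpha : R} :
  bucketing w tau -> measurable_fun setT p -> (forall t, 0 <= p t <= 1) ->
  measurable_fun setT g -> (forall t, `|g t| <= B) -> 0 <= alpha ->
  (forall k, 0 < fine (P (p @^-1` tau k)) ->
     `|Ex P (fun t => g t * \1_(p @^-1` tau k) t) / fine (P (p @^-1` tau k))|
       <= alpha / fine (P (p @^-1` tau k))) ->
  `|Ex P (fun t => p t * g t)| <= n%:R * alpha + w / 2 * B.
Proof.
move=> tau_bucketing mp p01 mg gB alpha_ge0 tau_cons.
have mA k : measurable (p @^-1` tau k).
  by rewrite -[_ @^-1` _]setTI; exact: mp (measurable_bucket tau_bucketing k).
have bA k : bounded_measurable (\1_(p @^-1` tau k) : T -> R) :=
  bounded_measurable_indic (mA k).
have bp : bounded_measurable p.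
  split => //; exists 1 => t.
  by have /andP[p_ge0 p_le1] := p01 t; rewrite ger0_norm.
have bg : bounded_measurable g by split => //; exists B.
have bgA k := bounded_measurableM bg (bA k).
pose c t := \sum_(k < n) bucket_mid w k * \1_(p @^-1` tau k) t.
have bc : bounded_measurable c.
  apply: (bounded_measurable_sum _
    (fun k t => bucket_mid w k * \1_(p @^-1` tau k) t)) => k.
  exact: bounded_measurableM (bounded_measurable_cst _) (bA k).
have -> : (fun t => p t * g t) = (fun t => c t * g t + (p t - c t) * g t).
  by apply: funext => t; ring.
rewrite ExD; last 2 first.
- exact: bounded_measurableM.
- exact: bounded_measurableM (bounded_measurableB _ _) _.
apply: le_trans (ler_normD _ _) (lerD _ _).
- have -> : (fun t => c t * g t) =
      (fun t => \sum_(k < n) bucket_mid w k * (g t * \1_(p @^-1` tau k) t)).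
    by apply: funext => t; rewrite mulr_suml; apply: eq_bigr => k _; ring.
  rewrite Ex_sum => [|k]; last first.
    exact: bounded_measurableM (bounded_measurable_cst _) (bgA k).
  apply: le_trans (ler_norm_sum _ _ _) _.
  rewrite mulr_natl -[n in alpha *+ n]card_ord -sumr_const.
  apply: ler_sum => k _.
  rewrite ExZ; last exact: bgA.
  have /andP[mid_ge0 mid_le1] := bucket_mid_ge0_le1 tau_bucketing k.
  rewrite normrM (ger0_norm mid_ge0) -[alpha]mul1r ler_pM //.
  exact: norm_Ex_mul_indic_le bg (mA k) alpha_ge0 (tau_cons k).
- apply: le_trans (le_norm_Ex P (g := fun=> w / 2 * B) _ _ _) _.
  + exact: bounded_measurableM (bounded_measurableB _ _) _.
  + exact: bounded_measurable_cst.
  + move=> t; rewrite normrM ler_pM //.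
    exact: bucket_round_err tau_bucketing _ (p01 t).
  by rewrite Ex_cst.
Qed.

Lemma norm_Ex_dotvB_le {d : nat} (a b c : T -> vec R d) (e : R) :
  (forall i, bounded_measurable (fun t => a t i)) ->
  (forall i, bounded_measurable (fun t => b t i)) ->
  (forall i, bounded_measurable (fun t => c t i)) ->
  (forall i, `|Ex P (fun t => a t i * (b t i - c t i))| <= e) ->
  `|Ex P (fun t => dotv (a t) (b t)) - Ex P (fun t => dotv (a t) (c t))|
    <= d%:R * e.
Proof.
move=> ba bb bc abc_le.
have bdot v : (forall i, bounded_measurable (fun t => v t i)) ->
    bounded_measurable (fun t => dotv (a t) (v t)).
  by move=> bv; apply: bounded_measurable_sum => i; exact: bounded_measurableM.
rewrite -ExB; [|exact: bdot..].
have -> : (fun t => dotv (a t) (b t) - dotv (a t) (c t)) =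
          (fun t => \sum_(i < d) a t i * (b t i - c t i)).
  apply: funext => t; rewrite /dotv -sumrB.
  by apply: eq_bigr => i _; rewrite mulrBr.
rewrite Ex_sum => [|i]; last first.
  exact: bounded_measurableM (bounded_measurableB _ _).
apply: le_trans (ler_norm_sum _ _ _) _.
rewrite mulr_natl -[d in e *+ d]card_ord -sumr_const.
by apply: ler_sum => i _.
Qed.

End bucket_consistency.

Lemma mulr_sqrt_div {R : rcfType} (a b : R) : 0 <= a -> 0 < b ->
  b * Num.sqrt (a / b) = Num.sqrt (a * b).
Proof.
move=> a_ge0 b_gt0; have sb_gt0 : 0 < Num.sqrt b by rewrite sqrtr_gt0.
rewrite !sqrtrM // sqrtrV ?ltW // -{1}[b](sqr_sqrtr (ltW b_gt0)).
by field; rewrite gt_eqF.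
Qed.

Lemma divr_sqrt_div {R : rcfType} (a b : R) : 0 < a -> 0 < b ->
  a / Num.sqrt (a / b) = Num.sqrt (a * b).
Proof.
move=> a_gt0 b_gt0.
have sa_gt0 : 0 < Num.sqrt a by rewrite sqrtr_gt0.
have sb_gt0 : 0 < Num.sqrt b by rewrite sqrtr_gt0.
rewrite !sqrtrM ?ltW // sqrtrV ?ltW // -{1}[a](sqr_sqrtr (ltW a_gt0)).
by field; rewrite !gt_eqF.
Qed.

Theorem corollary1
  (R : realType) (dsp : measure_display) (T : measurableType dsp)
  (P : probability T R) (X : Type) (d : nat)
  (Ys : set (vec R d)) (M : R) (xs : T -> X) (ys : T -> vec R d)
  (Omega : set (vec R d)) (h : X -> vec R d) (pi : X -> vec R d)
  (alpha : R) (n : nat) (tau : 'I_n -> set R) :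
  (forall y, Ys y -> forall i, `|y i| <= M) ->
  (forall t, Ys (ys t)) ->
  (forall a, Omega a -> forall i, 0 <= a i <= 1) ->
  (forall x, Ys (h x)) ->
  (forall i, measurable_fun setT (fun t => ys t i)) ->
  (forall i, measurable_fun setT (fun t => h (xs t) i)) ->
  (forall i, measurable_fun setT (fun t => pi (xs t) i)) ->
  0 < alpha ->
  bucketing (Num.sqrt (alpha / M)) tau ->
  induced_policy Omega h pi ->
  consistent P xs ys h alpha (level_sets tau pi) ->
  `| Ex P (fun t => dotv (pi (xs t)) (h (xs t))) -
     Ex P (fun t => dotv (pi (xs t)) (ys t)) |
    <= 2 * d%:R * Num.sqrt (alpha * M).
Proof.
move=> Ys_le_M ys_Ys Omega01 h_Ys mys mh mpi alpha_gt0 tau_bucketing pi_induced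
  h_consistent.
set w := Num.sqrt (alpha / M) in tau_bucketing *.
have w_gt0 : 0 < w := bucketing_width_gt0 tau_bucketing.
have M_gt0 : 0 < M by move: w_gt0; rewrite sqrtr_gt0 pmulr_rgt0 // invr_gt0.
have n_alpha : n%:R * alpha = Num.sqrt (alpha * M).
  case: tau_bucketing => nw1 _ _ _.
  rewrite -divr_sqrt_div // -/w; apply: (mulIf (lt0r_neq0 w_gt0)).
  by rewrite divfK ?lt0r_neq0 // mulrAC nw1 mul1r.
have pi01 x i : 0 <= pi x i <= 1 by apply: Omega01; case: (pi_induced x).
have ys_le_M t i : `|ys t i| <= M by exact: Ys_le_M (ys_Ys t) i.
have h_le_M x i : `|h x i| <= M by exact: Ys_le_M (h_Ys x) i.
have bpi i : bounded_measurable (fun t => pi (xs t) i).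
  split => //; exists 1 => t.
  by have /andP[? ?] := pi01 (xs t) i; rewrite ger0_norm.
have bys i : bounded_measurable (fun t => ys t i) by split; last exists M.
have bh i : bounded_measurable (fun t => h (xs t) i) by split; last exists M.
rewrite distrC -mulrA mulrCA; apply: norm_Ex_dotvB_le => // i.
have yh_le t : `|ys t i - h (xs t) i| <= M + M.
  exact: le_trans (ler_normB _ _) (lerD _ _).
have level_consistent k := h_consistent _ (ex_intro _ i (ex_intro _ k erefl)).
apply: le_trans (norm_Ex_mul_le_bucketing P
  (g := fun t => ys t i - h (xs t) i) tau_bucketing (mpi i)
  (fun t => pi01 (xs t) i) (measurable_realfun.measurable_funB (mys i) (mh i))
  yh_le (ltW alpha_gt0) (fun k Pk => level_consistent k Pk i)) _.
have -> : w / 2 * (M + M) = M * w by field.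
rewrite n_alpha (mulr_sqrt_div _ _ (ltW alpha_gt0) M_gt0).
by rewrite -[_ + _]mulr2n mulr_natl.
Qed.
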